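(* Let $\Omega$ be a smoothly bounded open subset of $\mathbb{C}$ and let $\Delta=\{(\sigma,\sigma):\sigma\in\partial\Omega\}$ be the diagonal in $\partial\Omega\times\partial\Omega$. Then $\Omega$ is convex if and only if $P_{\Omega}(\sigma,\tau)\geq 0$ for all $(\sigma,\tau)\in(\partial\Omega\times\partial\Omega)\setminus\Delta$.
   Context: An open set $\Omega\subseteq\mathbb{C}$ is smoothly bounded if it is bounded and $\partial\Omega$ is an embedded smooth submanifold of $\mathbb{C}$. Let $n_{\Omega}\colon\partial\Omega\to\mathbb{C}$ denote the outward unit normal vector of $\Omega$. The double-layer potential $P_{\Omega}\colon(\partial\Omega\times\mathbb{C})\setminus\Delta\to\mathbb{R}$ is $P_{\Omega}(\sigma,z)=\frac{1}{\pi}\operatorname{Re}\Big(\frac{n_{\Omega}(\sigma)}{\sigma-z}\Big)$ for $\sigma\in\partial\Omega$, $z\in\mathbb{C}$, $\sigma\neq z$. (The paper phrases the condition as ''$P_{\Omega}$ is positive'', positive meaning nonnegative.) *)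

(* The complex plane C is identified with R * R
   (R : realType), the point x + i y being the pair (x, y). *)
From HB Require Import structures.
From mathcomp Require Import all_boot all_order all_algebra.
From mathcomp Require Import all_classical all_reals all_analysis.
From mathcomp Require complex.
Import complex.ComplexField.
Set Implicit Arguments. Unset Strict Implicit. Unset Printing Implicit Defensive.
Import Order.TTheory GRing.Theory Num.Theory.
Import numFieldNormedType.Exports.
Local Open Scope classical_set_scope.
Local Open Scope ring_scope.

Section Defs.
Variable R : realType.
Notation P2 := (R * R)%type.

Fixpoint iter_deriv (f : P2 -> R) (l : seq P2) : P2 -> R :=
  match l with
  | [::] => f
  | v :: l' => fun x => 'D_v (iter_deriv f l') x
  end.

Definition smooth_on (U : set P2) (f : P2 -> R) : Prop :=
  forall l : seq P2,
    (forall v x, U x -> derivable (iter_deriv f l) x v) /\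
    {in U, continuous (iter_deriv f l)}.

Definition grad (f : P2 -> R) (x : P2) : P2 :=
  ('D_(1, 0) f x, 'D_(0, 1) f x).
Definition enorm (v : P2) : R := Num.sqrt (v.1 ^+ 2 + v.2 ^+ 2).

Definition bdry (A : set P2) : set P2 := closure A `\` interior A.

Definition local_defining_fun (Omega : set P2) (sigma : P2)
    (U : set P2) (rho : P2 -> R) : Prop :=
  [/\ open U, U sigma, smooth_on U rho,
      (forall z, U z -> (Omega z <-> rho z < 0)) &
      grad rho sigma != 0].

Definition smoothly_bounded (Omega : set P2) : Prop :=
  [/\ open Omega, bounded_set Omega &
      forall sigma, bdry Omega sigma ->
        exists U rho, local_defining_fun Omega sigma U rho].

Definition outward_unit_normal (Omega : set P2) (sigma v : P2) : Prop :=
  exists U rho, local_defining_fun Omega sigma U rho /\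
    v = (enorm (grad rho sigma))^-1 *: grad rho sigma.

Definition convex_set2 (Omega : set P2) : Prop :=
  forall x y (t : R), Omega x -> Omega y -> 0 <= t <= 1 ->
    Omega ((1 - t) *: x + t *: y).

Definition to_C (z : P2) : complex.complex R := complex.Complex z.1 z.2.
Definition double_layer (n : P2 -> P2) (sigma z : P2) : R :=
  pi^-1 * complex.Re (to_C (n sigma) / (to_C sigma - to_C z)).

End Defs.

From HB Require Import structures.
From mathcomp Require Import all_boot all_order all_algebra.
From mathcomp Require Import all_classical all_reals all_analysis.
From mathcomp Require complex.
From mathcomp Require Import ring lra.
Import complex.ComplexField.
Set Implicit Arguments. Unset Strict Implicit. Unset Printing Implicit Defensive.
Import Order.TTheory GRing.Theory Num.Theory.
Import numFieldNormedType.Exports.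
Local Open Scope classical_set_scope.
Local Open Scope ring_scope.

(** Since Re (n / (sigma - tau)) = <n, sigma - tau> / |sigma - tau|^2 and n is a
   positive multiple of the gradient of a defining function rho, the positivity
   of the double-layer potential says that every boundary point s supports the
   boundary: <n(s), tau - s> <= 0 for all boundary points tau.

   If Omega is convex, so is its closure, hence the segment from s towards tau
   stays where rho <= 0, while rho(s) >= 0; a first-order expansion of rho at s
   then forbids <grad rho(s), tau - s> > 0.  Only continuity of the partial
   derivatives is available, so the expansion is obtained from two
   one-dimensional mean value theorems along the coordinate axes.

   Conversely, a bounded open set lies in every closed half-plane containing its
   boundary (push an offending point along the normal until it leaves the set),
   and, being open, in the corresponding open half-plane.  If a point of the
   segment [x, y] between x, y in Omega were missing from Omega, the segment
   would meet the boundary at some s, and <n(s), s> would be a convex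
   combination of the strictly smaller values <n(s), x> and <n(s), y>. *)

Section ConvexityDoubleLayer.
Variable R : realType.
Local Notation P2 := (R * R)%type.
Local Notation e1 := ((1, 0) : P2).
Local Notation e2 := ((0, 1) : P2).
Implicit Types (A U : set P2) (rho : P2 -> R) (m p s t u v w x y : P2).

Definition dotp u v : R := u.1 * v.1 + u.2 * v.2.

Lemma dotpDr m u v : dotp m (u + v) = dotp m u + dotp m v.
Proof. by rewrite /dotp /=; ring. Qed.

Lemma dotpBr m u v : dotp m (u - v) = dotp m u - dotp m v.
Proof. by rewrite /dotp /=; ring. Qed.

Lemma dotpZr m (k : R) v : dotp m (k *: v) = k * dotp m v.
Proof. by rewrite /dotp /= -![k *: _]/(k * _); ring. Qed.

Lemma dotpZl m (k : R) v : dotp (k *: m) v = k * dotp m v.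
Proof. by rewrite /dotp /= -![k *: _]/(k * _); ring. Qed.

Lemma dotp_gt0 m : m != 0 -> 0 < dotp m m.
Proof.
case: m => a b nz; rewrite /dotp /= -!expr2 lt_def addr_ge0 ?sqr_ge0 // andbT.
rewrite paddr_eq0 ?sqr_ge0 // !sqrf_eq0.
by apply: contra nz => /andP[/eqP-> /eqP->].
Qed.

Lemma Re_div_to_C a s t :
  complex.Re (to_C a / (to_C s - to_C t)) = dotp a (s - t) / dotp (s - t) (s - t).
Proof.
case: a s t => [a1 a2] [s1 s2] [t1 t2].
rewrite /to_C /dotp /= -!expr2.
rewrite [in LHS]/GRing.inv /= [in LHS]/GRing.mul /=.
by rewrite -!/(GRing.mul _ _) -!/(GRing.inv _); ring.
Qed.

Lemma double_layer_ge0E (n : P2 -> P2) s t : s <> t ->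
  (0 <= double_layer n s t) = (dotp (n s) t <= dotp (n s) s).
Proof.
move=> /eqP; rewrite -subr_eq0 => /dotp_gt0 st.
rewrite /double_layer Re_div_to_C pmulr_rge0 ?invr_gt0 ?pi_gt0 //.
by rewrite pmulr_lge0 ?invr_gt0 // dotpBr subr_ge0.
Qed.

Lemma enorm_gt0 v : v != 0 -> 0 < enorm v.
Proof. by move/dotp_gt0; rewrite /enorm sqrtr_gt0 /dotp !expr2. Qed.

Lemma outward_unit_normal_neq0 A s v : outward_unit_normal A s v -> v != 0.
Proof.
case=> U [rho [[_ _ _ _ g0] ->]].
by rewrite scaler_eq0 negb_or invr_eq0 g0 andbT gt_eqF // enorm_gt0.
Qed.

Lemma bdry_open_notin A s : open A -> bdry A s -> ~ A s.
Proof. by move=> oA [_]; rewrite (proj1 (interior_id _) oA). Qed.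

Lemma convex_combE x y (t : R) : (1 - t) *: x + t *: y = x + t *: (y - x).
Proof. by rewrite scalerBl scale1r scalerBr addrAC addrA. Qed.

Lemma closure_sub_preimage (f : P2 -> P2) A : continuous f ->
  A `<=` f @^-1` closure A -> closure A `<=` f @^-1` closure A.
Proof.
move=> fc sub; rewrite {1}closureE; apply: smallest_sub => //.
by apply: (continuous_closedP f).1 => //; exact: closed_closure.
Qed.

Lemma convex_closure A : convex_set2 A -> convex_set2 (closure A).
Proof.
move=> cvA x y t cx cy t01.
have inA_closure a : A a -> closure A ((1 - t) *: a + t *: y).
  move=> Aa; apply: (closure_sub_preimage (f := fun b => (1 - t) *: a + t *: b)) cy.
    by move=> b; apply: cvgD; [exact: cvg_cst | exact: scaler_continuous].
  exact: (fun b Ab => subset_closure (cvA _ _ _ Aa Ab t01)).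
apply: (closure_sub_preimage (f := fun a => (1 - t) *: a + t *: y)) cx => //.
by move=> a; apply: cvgD; [exact: scaler_continuous | exact: cvg_cst].
Qed.

Lemma segment_meets_bdry A x y : open A -> A x -> ~ A y ->
  exists2 t : R, 0 <= t <= 1 & bdry A ((1 - t) *: x + t *: y).
Proof.
move=> oA Ax Ay; apply: contrapT => nobdry.
pose p (t : R) := (1 - t) *: x + t *: y.
have p_cont : continuous p.
  move=> t; rewrite /p; under eq_fun do rewrite convex_combE.
  by apply: cvgD; [exact: cvg_cst | exact: scalel_continuous].
have conn : connected (p @` `[0, 1]).
  apply: connected_continuous_connected; first exact: segment_connected.
  exact: continuous_subspaceT.
have sep : separated A (~` closure A).
  split; first by apply/seteqP; split => // z [].
  have : A `<=` (closure A)° by rewrite -open_subsetE //; exact: subset_closure.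
  rewrite closure_setC => AsubI; apply/seteqP; split => // z [Az]; apply.
  exact: AsubI.
have sub : p @` `[0, 1] `<=` A `|` ~` closure A.
  move=> _ [t t01 <-]; have [|nAp] := pselect (A (p t)); [by left | right].
  move=> cl; apply: nobdry; exists t; first by move: t01; rewrite /= in_itv.
  by split => //; rewrite (proj1 (interior_id _) oA).
have x_in : (p @` `[0, 1]) x.
  by exists 0; [rewrite /= in_itv /= lexx ler01 | rewrite /p subr0 scale1r scale0r addr0].
have y_in : (p @` `[0, 1]) y.
  by exists 1; [rewrite /= in_itv /= lexx ler01 | rewrite /p subrr scale0r scale1r add0r].
have [inA|inC] := connected_subset sep sub conn; first exact/Ay/inA.
exact: inC x_in (subset_closure Ax).
Qed.

Lemma open_sub_halfplane_lt A m (c : R) : open A -> m != 0 ->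
  (forall x, A x -> dotp m x <= c) -> forall x, A x -> dotp m x < c.
Proof.
move=> oA m0 le_c x Ax.
have /nbhs_ballP [e e0 ballA] := oA x Ax.
have mm0 := dotp_gt0 m0.
have nm0 : 0 < `|m| by rewrite normr_gt0.
pose k := e / (2 * `|m|).
have k0 : 0 < k by rewrite divr_gt0 // mulr_gt0.
have : A (x + k *: m).
  apply: ballA; rewrite -ball_normE /= opprD addrA subrr add0r normrN normrZ.
  rewrite gtr0_norm // /k invfM mulrA divfK ?gt_eqF //; move: e0 => /= e0; lra.
move=> /le_c; rewrite dotpDr dotpZr => le_xk.
have : 0 < k * dotp m m by rewrite mulr_gt0.
lra.
Qed.

Lemma bounded_open_sub_halfplane A m (c : R) : open A -> bounded_set A -> m != 0 ->
  (forall t, bdry A t -> dotp m t <= c) -> forall x, A x -> dotp m x <= c.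
Proof.
move=> oA [M [_ bndA]] m0 bdry_le x Ax; rewrite leNgt; apply/negP => cx.
have normA z : A z -> `|z| <= M + 1.
  by move=> Az; apply: (bndA (M + 1)) => //; rewrite ltrDl ltr01.
have Mx := normA x Ax.
have nm0 : 0 < `|m| by rewrite normr_gt0.
pose k := (2 * M + 3) / `|m|.
have k0 : 0 < k by rewrite divr_gt0 //; move: (normr_ge0 x) => ?; lra.
have km : `|k *: m| = 2 * M + 3 by rewrite normrZ gtr0_norm // divfK ?gt_eqF.
have /(segment_meets_bdry oA Ax) [t /andP[t0 _]] : ~ A (x + k *: m).
  by move=> /normA; have := lerB_normD (k *: m) x; rewrite km [k *: m + x]addrC; lra.
rewrite convex_combE [x + _ - x]addrC addKr => /bdry_le.
rewrite dotpDr !dotpZr.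
have : 0 <= t * (k * dotp m m) by rewrite mulr_ge0 // mulr_ge0 // ltW // dotp_gt0.
lra.
Qed.

Lemma convex_of_bdry_halfplanes A (m : P2 -> P2) : open A -> bounded_set A ->
  (forall s, bdry A s -> m s != 0) ->
  (forall s t, bdry A s -> bdry A t -> dotp (m s) t <= dotp (m s) s) ->
  convex_set2 A.
Proof.
move=> oA bA m0 supp x y t Ax Ay /andP[t0 t1]; apply: contrapT => Az.
have [u /andP[u0 u1]] := segment_meets_bdry oA Ax Az.
have -> : (1 - u) *: x + u *: ((1 - t) *: x + t *: y) = (1 - u * t) *: x + (u * t) *: y.
  by rewrite !convex_combE addrAC subrr add0r scalerA.
set s := _ + _ => bs.
have inH := bounded_open_sub_halfplane oA bA (m0 s bs) (fun t => supp s t bs).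
have lt_s := open_sub_halfplane_lt oA (m0 s bs) inH.
have := lt_s x Ax; have := lt_s y Ay; rewrite {3 6}/s dotpDr !dotpZr.
have : 0 <= u * t by rewrite mulr_ge0.
have : u * t <= 1 by rewrite mulr_ile1.
move: (u * t) (dotp (m s) x) (dotp (m s) y) => r a b r1 r0.
have [ab|ab] := leP a b; nra.
Qed.

Lemma is_derive_along_line rho p e (c : R) :
  derivable rho (p + c *: e) e ->
  is_derive c 1 (fun h => rho (p + h *: e)) ('D_e rho (p + c *: e)).
Proof.
move=> d.
have E : (fun h : R => h^-1 *: (((fun h => rho (p + h *: e)) \o shift c) (h *: 1)
                                 - rho (p + c *: e)))
       = (fun h => h^-1 *: ((rho \o shift (p + c *: e)) (h *: e) - rho (p + c *: e))).
  by apply/funext => h /=; rewrite -[h%:A]/(h * 1) mulr1 scalerDl addrCA.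
by apply: DeriveDef; [rewrite /derivable E | rewrite /derive E].
Qed.

Lemma MVT_between (f df : R -> R) (a b : R) :
  (forall x : R, x \in `]Num.min a b, Num.max a b[ -> is_derive x 1 f (df x)) ->
  {within `[Num.min a b, Num.max a b], continuous f} ->
  exists2 c, c \in `[Num.min a b, Num.max a b] & f b - f a = df c * (b - a).
Proof.
have [ab|/ltW ba] := leP a b; first exact: MVT_segment.
move=> /(MVT_segment ba) H /H [c cI E].
by exists c => //; rewrite -opprB E -mulrN opprB.
Qed.

Lemma MVT_line rho p e (a : R) :
  (forall k : R, `|k| <= `|a| ->
     derivable rho (p + k *: e) e /\ {for p + k *: e, continuous rho}) ->
  exists2 k : R, `|k| <= `|a| & rho (p + a *: e) - rho p = a * 'D_e rho (p + k *: e).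
Proof.
move=> H.
have in_range (k : R) : k \in `[Num.min 0 a, Num.max 0 a] -> `|k| <= `|a|.
  rewrite in_itv /=; case: (leP 0 a) => a0 /andP[k0 ka].
    by rewrite !ger0_norm // (le_trans k0).
  by rewrite !ler0_norm ?(ltW a0) //; lra.
pose f h := rho (p + h *: e).
have f_deriv (x : R) : x \in `]Num.min 0 a, Num.max 0 a[ ->
    is_derive x 1 f ('D_e rho (p + x *: e)).
  rewrite in_itv /= => /andP[lo hi].
  apply/is_derive_along_line/(H x _).1/in_range.
  by rewrite in_itv /= !ltW.
have f_cont : {within `[Num.min 0 a, Num.max 0 a], continuous f}.
  apply: continuous_in_subspaceT => x; rewrite inE => /in_range xa.
  apply: (continuous_comp (f := fun h : R => p + h *: e)); last exact: (H x xa).2.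
  by apply: cvgD; [exact: cvg_cst | exact: scalel_continuous].
have [c /in_range ca E] := MVT_between f_deriv f_cont.
by exists c => //; move: E; rewrite /f scale0r addr0 subr0 mulrC.
Qed.

Lemma norm_pair (a b : R) : `|(a, b) : P2| = Num.max `|a| `|b|.
Proof. by []. Qed.

Lemma scale_e1 (k : R) : k *: e1 = (k, 0).
Proof. by rewrite -[LHS]/(k * 1, k * 0) mulr1 mulr0. Qed.

Lemma scale_e2 (k : R) : k *: e2 = (0, k).
Proof. by rewrite -[LHS]/(k * 0, k * 1) mulr1 mulr0. Qed.

Lemma increment_by_partials rho s v (d : R) :
  (forall p, `|p| < d -> [/\ derivable rho (s + p) e1, derivable rho (s + p) e2
                           & {for s + p, continuous rho}]) ->
  `|v| < d ->
  exists p1 p2, [/\ `|p1| < d, `|p2| < d &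
    rho (s + v) - rho s = v.1 * 'D_e1 rho (s + p1) + v.2 * 'D_e2 rho (s + p2)].
Proof.
case: v => a b H; rewrite norm_pair gt_max => /andP[ad bd] /=.
have shift2 (k : R) : s + a *: e1 + k *: e2 = s + (a, k).
  by rewrite -addrA scale_e1 scale_e2 -[(a, 0) + _]/(a + 0, 0 + k) addr0 add0r.
have [k1 k1a E1] : exists2 k1 : R, `|k1| <= `|a| &
    rho (s + a *: e1) - rho s = a * 'D_e1 rho (s + k1 *: e1).
  apply: MVT_line => k ka.
  have /H[? _ ?] : `|k *: e1| < d.
    by rewrite scale_e1 norm_pair normr0 max_l ?normr_ge0 // (le_lt_trans ka).
  by split.
have [k2 k2b E2] : exists2 k2 : R, `|k2| <= `|b| &
    rho (s + a *: e1 + b *: e2) - rho (s + a *: e1)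
      = b * 'D_e2 rho (s + a *: e1 + k2 *: e2).
  apply: MVT_line => k kb; rewrite shift2.
  have /H[_ ? ?] : `|(a, k) : P2| < d by rewrite norm_pair gt_max ad (le_lt_trans kb).
  by split.
exists (k1 *: e1), (a, k2); split.
- by rewrite scale_e1 norm_pair normr0 max_l ?normr_ge0 // (le_lt_trans k1a).
- by rewrite norm_pair gt_max ad (le_lt_trans k2b).
- by move: E2; rewrite !shift2 /=; lra.
Qed.

Lemma grad_ascent_near U rho s w :
  nbhs s U -> (forall v x, U x -> derivable rho x v) -> {in U, continuous rho} ->
  {for s, continuous ('D_e1 rho)} -> {for s, continuous ('D_e2 rho)} ->
  0 < dotp (grad rho s) w -> \forall h \near 0^'+, rho s < rho (s + h *: w).
Proof.
move=> Us drv crho c1 c2; rewrite /grad /dotp /=.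
set a := 'D_e1 rho s; set b := 'D_e2 rho s; set c := _ + _ => c0.
have near_D1 : \forall p \near s, w.1 * a - c / 2 < w.1 * 'D_e1 rho p.
  apply: (cvgr_gt _ (cvgMl_tmp (a := w.1) c1)).
  by rewrite ltrBlDr ltrDl divr_gt0.
have near_D2 : \forall p \near s, w.2 * b - c / 2 < w.2 * 'D_e2 rho p.
  apply: (cvgr_gt _ (cvgMl_tmp (a := w.2) c2)).
  by rewrite ltrBlDr ltrDl divr_gt0.
have : nbhs s (U `&` ([set p | w.1 * a - c / 2 < w.1 * 'D_e1 rho p]
                   `&` [set p | w.2 * b - c / 2 < w.2 * 'D_e2 rho p])).
  exact: filterI Us (filterI near_D1 near_D2).
case/nbhs_ballP => d /= d0 ball_d.
have in_ball p : `|p| < d -> [/\ U (s + p),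
    w.1 * a - c / 2 < w.1 * 'D_e1 rho (s + p) & w.2 * b - c / 2 < w.2 * 'D_e2 rho (s + p)].
  move=> pd; have [] := ball_d (s + p).
    by rewrite -ball_normE /= opprD addrA subrr add0r normrN.
  by move=> ? [].
have small : \forall h \near 0^'+, `|h *: w| < d.
  apply: cvgr0_norm_lt d0; apply: cvg_at_right_filter.
  by rewrite -[X in _ --> X](scale0r w); exact: scalel_continuous.
near=> h.
have h0 : 0 < h by near: h; exact: nbhs_right_gt.
have hyp p : `|p| < d -> [/\ derivable rho (s + p) e1, derivable rho (s + p) e2
                           & {for s + p, continuous rho}].
  by case/in_ball => Up _ _; split; [exact: drv | exact: drv | apply: crho; rewrite inE].
have hw : `|h *: w| < d by near: h; exact: small.
have [p1 [p2 [/in_ball[_ lt1 _] /in_ball[_ _ lt2] E]]] := increment_by_partials hyp hw.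
rewrite -subr_gt0 E /= -![h *: _]/(h * _) -!mulrA -mulrDr mulr_gt0 //.
rewrite /c in lt1 lt2 *; lra.
Unshelve. all: by end_near.
Qed.

Lemma closure_le0 A U rho p : nbhs p U -> {for p, continuous rho} ->
  (forall z, U z -> A z -> rho z < 0) -> closure A p -> rho p <= 0.
Proof.
move=> Up crho neg clp; rewrite leNgt; apply/negP => r0.
have [q [Aq [Uq rq]]] := clp _ (filterI Up (cvgr_gt _ crho _ r0)).
by have := neg q Uq Aq; lra.
Qed.

Lemma grad_supports_convex A U rho s t :
  convex_set2 A -> open A -> local_defining_fun A s U rho -> bdry A s ->
  closure A t -> dotp (grad rho s) t <= dotp (grad rho s) s.
Proof.
move=> cvA oA [oU Us smooth defA _] bs clt.
have [drv crho] := smooth [::].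
have [_ c1] := smooth [:: e1]; have [_ c2] := smooth [:: e2].
rewrite -subr_le0 -dotpBr leNgt; apply/negP.
move=> /(grad_ascent_near (oU s Us) drv crho (c1 s (mem_set Us)) (c2 s (mem_set Us))) up.
have rho_s : 0 <= rho s.
  by rewrite leNgt; apply/negP => /(defA s Us).2; exact: bdry_open_notin oA bs.
have to_s : (fun h => s + h *: (t - s)) @ 0^'+ --> s.
  apply: cvg_at_right_filter; rewrite -[X in _ --> X]addr0 -(scale0r (t - s)).
  by apply: cvgD; [exact: cvg_cst | exact: scalel_continuous].
near (0 : R)^'+ => h.
have Uh : U (s + h *: (t - s)) by near: h; exact: to_s _ (oU s Us).
have clh : closure A (s + h *: (t - s)).
  rewrite -convex_combE; apply: convex_closure bs.1 clt _ => //.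
  apply/andP; split; [near: h; exact: nbhs_right_ge | near: h; exact: nbhs_right_le].
have /= := closure_le0 (oU _ Uh) (crho _ (mem_set Uh)) (fun z Uz => (defA z Uz).1) clh.
have : rho s < rho (s + h *: (t - s)) by near: h; exact: up.
lra.
Unshelve. all: by end_near.
Qed.

Lemma outward_normal_supports_convex A s t v :
  convex_set2 A -> open A -> bdry A s -> outward_unit_normal A s v ->
  closure A t -> dotp v t <= dotp v s.
Proof.
move=> cvA oA bs [U [rho [ldf ->]]] clt.
have [_ _ _ _ g0] := ldf.
rewrite !dotpZl ler_pM2l ?invr_gt0 ?enorm_gt0 //.
exact: grad_supports_convex ldf bs clt.
Qed.

End ConvexityDoubleLayer.

Theorem proposition2p3 (R : realType) (Omega : set (R * R)) (n : R * R -> R * R) :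
  smoothly_bounded Omega ->
  (forall sigma, bdry Omega sigma -> outward_unit_normal Omega sigma (n sigma)) ->
  (convex_set2 Omega <->
   forall sigma tau, bdry Omega sigma -> bdry Omega tau -> sigma <> tau ->
     0 <= double_layer n sigma tau).
Proof.
move=> [oA bA _] normal; split => [cvA s t bs bt st | supp].
  rewrite double_layer_ge0E //.
  exact: outward_normal_supports_convex cvA oA bs (normal s bs) bt.1.
apply: (convex_of_bdry_halfplanes oA bA (m := n)).
  by move=> s /normal/outward_unit_normal_neq0.
move=> s t bs bt; have [<-|/eqP st] := eqVneq s t; first exact: lexx.
by rewrite -double_layer_ge0E //; exact: supp.
Qed.
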